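(* Let $M$ be a duplicial module in a pre-additive category. For all $n\ge0$, $$\kappa_n=1-b_{n+1}d_n-d_{n-1}b_n .$$
   Context: Let $\mathcal A$ be a pre-additive category. Let $\Lambda_+$ be the category with objects $[n]$, $n\ge0$, where $\Lambda_+([m],[n])$ is the set of weakly monotone $f:\mathbb Z\to\mathbb Z$ with $f(j+m+1)=f(j)+n+1$ for all $j$ and $f(0)\ge0$ (determined by values on $\{0,\dots,m\}$). Define $\varepsilon^n_i:[n-1]\to[n]$ ($n\ge1$, $0\le i\le n$) by $\varepsilon^n_i(j)=j$ for $0\le j<i$, $j+1$ for $i\le j\le n-1$, and $\eta^n_i:[n+1]\to[n]$ ($0\le i\le n+1$) by $\eta^n_i(j)=j$ for $0\le j\le i$, $j-1$ for $i<j\le n+1$. A duplicial module is a functor $M:\Lambda_+^{op}\to\mathcal A$; $M_n=M([n])$, $\partial_{n,i}=M(\varepsilon^n_i):M_n\to M_{n-1}$, $s_{n,i}=M(\eta^n_i):M_n\to M_{n+1}$. Convention $M_{-1}=0$, maps into/out of it zero. Define $b_n=\sum_{i=0}^n(-1)^i\partial_{n,i}$ ($b_0=0$), $d_n=\sum_{i=0}^{n+1}(-1)^is_{n,i}$ ($d_{-1}=0$), and the Karoubi operator $\kappa_n=(-1)^n(\partial_{n+1,0}s_{n,n+1}-s_{n-1,n}\partial_{n,0}):M_n\to M_n$ (so $\kappa_0=\partial_{1,0}s_{0,1}$). *)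

From HB Require Import structures.
From mathcomp Require Import all_boot all_order all_algebra.
Set Implicit Arguments. Unset Strict Implicit. Unset Printing Implicit Defensive.
Import GRing.Theory.
Local Open Scope ring_scope.

Record preadditive := PreAdditive {
  Obj : Type;
  Hom : Obj -> Obj -> zmodType;
  idm : forall a, Hom a a;
  hcomp : forall a b c, Hom b c -> Hom a b -> Hom a c;
  compA : forall a b c d (h : Hom c d) (g : Hom b c) (f : Hom a b),
      hcomp h (hcomp g f) = hcomp (hcomp h g) f;
  comp1m : forall a b (f : Hom a b), hcomp (idm b) f = f;
  compm1 : forall a b (f : Hom a b), hcomp f (idm a) = f;
  compDl : forall a b c (g1 g2 : Hom b c) (f : Hom a b),
      hcomp (g1 + g2) f = hcomp g1 f + hcomp g2 f;
  compDr : forall a b c (g : Hom b c) (f1 f2 : Hom a b),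
      hcomp g (f1 + f2) = hcomp g f1 + hcomp g f2
}.
Arguments idm {p} a.
Arguments hcomp {p a b c}.

(* Morphisms [m] -> [n] of Lambda_+ : weakly monotone f : Z -> Z with
   f(j + m + 1) = f(j) + n + 1 and f(0) >= 0. *)
Definition isLam (m n : nat) (f : int -> int) : Prop :=
  [/\ (forall x y : int, (x <= y)%R -> (f x <= f y)%R),
      (forall j : int, f (j + (m.+1)%:Z) = f j + (n.+1)%:Z)
    & (0 <= f 0)%R].

(* A duplicial module: a functor Lambda_+^op -> C. [Mmap m n f] is M(f) for
   f : [m] -> [n] in Lambda_+ (values on non-morphisms are irrelevant). *)
Record duplicial (C : preadditive) := Duplicial {
  Mob : nat -> Obj C;
  Mmap : forall m n : nat, (int -> int) -> @Hom C (Mob n) (Mob m);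
  Mext : forall m n (f g : int -> int), isLam m n f -> isLam m n g ->
      (forall j, f j = g j) -> Mmap m n f = Mmap m n g;
  Mid : forall n, Mmap n n (fun j => j) = idm (Mob n);
  Mcomp : forall m n p (f g : int -> int), isLam m n f -> isLam n p g ->
      Mmap m p (fun j => g (f j)) = hcomp (Mmap m n f) (Mmap n p g)
}.
Arguments Mmap {C} d m n _.

(* epsilon^n_i : [n-1] -> [n] (n >= 1), periodically extended. *)
Definition eps (n i : nat) : int -> int := fun j =>
  let q := divz j n%:Z in let r := modz j n%:Z in
  q * (n.+1)%:Z + (if (r < i%:Z)%R then r else r + 1).

(* eta^n_i : [n+1] -> [n], periodically extended. *)
Definition eta (n i : nat) : int -> int := fun j =>
  let q := divz j (n.+2)%:Z in let r := modz j (n.+2)%:Z in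
  q * (n.+1)%:Z + (if (r <= i%:Z)%R then r else r - 1).

Section Ops.
Variables (C : preadditive) (M : duplicial C).

Definition face (n i : nat) : @Hom C (Mob M n.+1) (Mob M n) :=
  Mmap M n n.+1 (eps n.+1 i).
Definition degen (n i : nat) : @Hom C (Mob M n) (Mob M n.+1) :=
  Mmap M n.+1 n (eta n i).

Definition bS (n : nat) : @Hom C (Mob M n.+1) (Mob M n) :=
  \sum_(i < n.+2) (face n i) *~ ((-1) ^+ i).
Definition dd (n : nat) : @Hom C (Mob M n) (Mob M n.+1) :=
  \sum_(i < n.+2) (degen n i) *~ ((-1) ^+ i).

(* s_{n-1,n} partial_{n,0}, which is 0 for n = 0 (M_{-1} = 0) *)
Definition s_partial (n : nat) : @Hom C (Mob M n) (Mob M n) :=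
  match n return @Hom C (Mob M n) (Mob M n) with
  | 0 => 0
  | n'.+1 => hcomp (degen n' n'.+1) (face n' 0)
  end.

Definition kappa (n : nat) : @Hom C (Mob M n) (Mob M n) :=
  (hcomp (face n 0) (degen n n.+1) - s_partial n) *~ ((-1) ^+ n).

(* d_{n-1} b_n, which is 0 for n = 0 (d_{-1} = 0, b_0 = 0) *)
Definition d_b (n : nat) : @Hom C (Mob M n) (Mob M n) :=
  match n return @Hom C (Mob M n) (Mob M n) with
  | 0 => 0
  | n'.+1 => hcomp (dd n') (bS n')
  end.
End Ops.

(* Expanding [b_(n+1) d_n + d_(n-1) b_n] by bilinearity of composition gives
   two alternating double sums of the composites [∂_i s_j] and [s_j ∂_i].  The
   simplicial identities [∂_i s_i = ∂_(i+1) s_i = 1], [∂_i s_(j+1) = s_j ∂_i]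
   for [i <= j] and [∂_(i+1) s_j = s_j ∂_i] for [j < i] make everything cancel
   down to the identity, exactly as for a simplicial module, except that in a
   duplicial module [∂_0 s_(n+1) = s_n ∂_0] fails; the surviving defect
   [(-1)^n (∂_0 s_(n+1) - s_n ∂_0)] is the Karoubi operator.  The simplicial
   identities are equalities of composites in [Lambda_+], checked on one
   period [0..m] since morphisms of [Lambda_+] are determined there. *)

From HB Require Import structures.
From Pilot Require Import Defs.
From mathcomp Require Import all_boot all_order all_algebra zify.
Import Order.TTheory GRing.Theory Num.Theory.
Local Open Scope ring_scope.
Set Implicit Arguments. Unset Strict Implicit. Unset Printing Implicit Defensive.
Local Notation Hom := Defs.Hom.

Section AlternatingDoubleSum.
Variable V : zmodType.
Implicit Types (F A B : nat -> nat -> V) (e : V).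

Definition alt_sum2 n F : V :=
  \sum_(i < n) \sum_(j < n) F i j *~ (-1) ^+ (i + j)%N.

Definition alt_hook n F : V :=
  \sum_(i < n.+1) F i n *~ (-1) ^+ (i + n)%N + \sum_(j < n) F n j *~ (-1) ^+ (n + j)%N.

Lemma alt_sum2S n F : alt_sum2 n.+1 F = alt_sum2 n F + alt_hook n F.
Proof.
rewrite /alt_sum2 /alt_hook big_ord_recr /=.
under eq_bigr do rewrite big_ord_recr /=.
rewrite big_split /= big_ord_recr [in RHS]big_ord_recr /= -!addrA.
by congr (_ + (_ + _)); rewrite addrC.
Qed.

Lemma alt_sum2_tr n F : alt_sum2 n (fun i j => F j i) = alt_sum2 n F.
Proof.
rewrite /alt_sum2 exchange_big; apply: eq_bigr => i _.
by apply: eq_bigr => j _; rewrite addnC.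
Qed.

Lemma alt_sum2B n F B :
  alt_sum2 n F - alt_sum2 n B = alt_sum2 n (fun i j => F i j - B i j).
Proof.
rewrite /alt_sum2 -sumrB; apply: eq_bigr => i _.
by rewrite -sumrB; apply: eq_bigr => j _; rewrite mulrzBl.
Qed.

Lemma alt_sum2_delta n F i0 j0 : (i0 < n)%N -> (j0 < n)%N ->
  (forall i j, (i, j) != (i0, j0) -> F i j = 0) ->
  alt_sum2 n F = F i0 j0 *~ (-1) ^+ (i0 + j0)%N.
Proof.
move=> lt_i0 lt_j0 F0.
rewrite /alt_sum2 (bigD1 (Ordinal lt_i0)) //= [X in _ + X]big1 ?addr0 => [|i ne_i].
  rewrite (bigD1 (Ordinal lt_j0)) //= [X in _ + X]big1 ?addr0 // => j ne_j.
  by rewrite F0 ?mul0rz // xpair_eqE eqxx.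
apply: big1 => j _; rewrite F0 ?mul0rz // xpair_eqE; exact/nandP/or_introl.
Qed.

Lemma signS i : (-1) ^+ i.+1 = - (-1) ^+ i :> int.
Proof. by rewrite exprS mulN1r. Qed.

Lemma sign_double i : (-1) ^+ (i + i)%N = 1 :> int.
Proof. by rewrite exprD -expr2 sqrr_sign. Qed.

Lemma alt_sum2_presimplicial e A B N :
  (forall i, (i <= N)%N -> A i i = e) ->
  (forall i, (i < N)%N -> A i.+1 i = e) ->
  (forall i j, (i <= j < N)%N -> A i j.+1 = B i j) ->
  (forall i j, (j < i < N)%N -> A i.+1 j = B i j) ->
  alt_sum2 N.+1 A + alt_sum2 N B = e.
Proof.
elim: N => [|N IH] AA AS Aup Adown.
  by rewrite /alt_sum2 big_ord0 !big_ord1 addr0 AA.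
rewrite (alt_sum2S N.+1 A) (alt_sum2S N B) (addrACA (alt_sum2 N.+1 A)).
rewrite IH => [|i|i|i j|i j]; first last.
- by move=> ji; apply: Adown; lia.
- by move=> ij; apply: Aup; lia.
- by move=> iN; apply: AS; lia.
- by move=> iN; apply: AA; lia.
have colA : \sum_(i < N.+2) A i N.+1 *~ (-1) ^+ (i + N.+1)%N =
    e - \sum_(i < N.+1) B i N *~ (-1) ^+ (i + N)%N.
  rewrite big_ord_recr /= AA // sign_double addrC -sumrN; congr (_ + _).
  by apply: eq_bigr => i _; rewrite Aup 1?addnS ?signS ?mulrNz // -ltnS ltn_ord ltnSn.
have rowA : \sum_(j < N.+1) A N.+1 j *~ (-1) ^+ (N.+1 + j)%N =
    - e - \sum_(j < N) B N j *~ (-1) ^+ (N + j)%N.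
  rewrite big_ord_recr /= AS // (addSn N) signS sign_double mulrNz mulr1z addrC -sumrN.
  by congr (_ + _); apply: eq_bigr => j _; rewrite Adown 1?addSn ?signS ?mulrNz // ltn_ord ltnSn.
rewrite /alt_hook colA rowA -[RHS]addr0; congr (_ + _).
by rewrite addrACA !subrK subrr.
Qed.

Lemma alt_sum2_cyclic e A B n :
  (forall i, (i <= n.+1)%N -> A i i = e) ->
  (forall i, (i <= n)%N -> A i.+1 i = e) ->
  (forall i j, (i <= j <= n)%N -> (0 < i)%N || (j < n)%N -> A i j.+1 = B i j) ->
  (forall i j, (j < i <= n)%N -> A i.+1 j = B i j) ->
  alt_sum2 n.+2 A + alt_sum2 n.+1 B = e - (A 0 n.+1 - B 0 n) *~ (-1) ^+ n.
Proof.
move=> AA AS Aup Adown.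
pose A' i j := if (i == 0) && (j == n.+1) then B 0 n else A i j.
have sumA' : alt_sum2 n.+2 A' + alt_sum2 n.+1 B = e.
  apply: alt_sum2_presimplicial => [i|i|i j|i j] lt_i; rewrite /A'.
  - by case: ifP => [/andP[/eqP-> //]|_]; rewrite AA.
  - by rewrite AS.
  - case: ifP => [/andP[/eqP-> /eqP[->]] //|/negbT]; rewrite negb_and => ne.
    by apply: Aup; lia.
  - by rewrite Adown.
have defect : alt_sum2 n.+2 A - alt_sum2 n.+2 A' = (A 0 n.+1 - B 0 n) *~ (-1) ^+ n.+1.
  rewrite alt_sum2B (alt_sum2_delta (i0 := 0) (j0 := n.+1)) // /A' ?eqxx //.
  by move=> i j; rewrite xpair_eqE => /negbTE->; rewrite subrr.
by rewrite -[alt_sum2 _ A](subrK (alt_sum2 n.+2 A')) defect -addrA sumA' signS mulrNz addrC.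
Qed.
End AlternatingDoubleSum.

Section Preadditive.
Variable C : preadditive.

Lemma hcomp_is_nmod_morphism (a b c : Obj C) (g : Hom b c) :
  nmod_morphism (@hcomp C a b c g).
Proof.
split; last exact: compDr.
by apply: (addrI (hcomp g 0)); rewrite -compDr !addr0.
Qed.

Definition precomp (a b c : Obj C) (f : Hom a b) (g : Hom b c) : Hom a c := hcomp g f.

Lemma precomp_is_nmod_morphism (a b c : Obj C) (f : Hom a b) :
  nmod_morphism (@precomp a b c f).
Proof.
split=> [|g1 g2]; last exact: compDl.
by apply: (addrI (precomp f (0 : Hom b c))); rewrite /precomp -compDl !addr0.
Qed.
End Preadditive.

HB.instance Definition _ (C : preadditive) a b c g :=
  GRing.isNmodMorphism.Build _ _ (@hcomp C a b c g) (@hcomp_is_nmod_morphism C a b c g).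
HB.instance Definition _ (C : preadditive) a b c f :=
  GRing.isNmodMorphism.Build _ _ (@precomp C a b c f) (@precomp_is_nmod_morphism C a b c f).

Lemma hcomp_alt_sums (C : preadditive) (a b c : Obj C) n
    (f : nat -> Hom b c) (g : nat -> Hom a b) :
  hcomp (\sum_(i < n) f i *~ (-1) ^+ i) (\sum_(j < n) g j *~ (-1) ^+ j) =
  alt_sum2 n (fun i j => hcomp (f i) (g j)).
Proof.
rewrite -[LHS]/(precomp _ _) (raddf_sum (precomp _)); apply: eq_bigr => i _.
rewrite (raddfMz (precomp _)) /= /precomp /= raddf_sum mulrz_suml.
apply: eq_bigr => j _; rewrite (raddfMz (hcomp _)) -mulrzA.
by rewrite mulrC exprD.
Qed.

Definition periodic_ext (N M : nat) (f0 : int -> int) (j : int) : int :=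
  (j %/ N%:Z)%Z * M%:Z + f0 (j %% N%:Z)%Z.

Lemma modz_bounds (j : int) N : (0 < N)%N -> 0 <= (j %% N%:Z)%Z < N%:Z.
Proof. by move=> N_gt0; rewrite modz_ge0 ?ltz_pmod //; lia. Qed.

Lemma periodic_extE N M f0 q r : (0 < N)%N -> 0 <= r < N%:Z ->
  periodic_ext N M f0 (q * N%:Z + r) = q * M%:Z + f0 r.
Proof.
move=> N_gt0 r_bd; rewrite /periodic_ext divzMDl; last by lia.
by rewrite divz_small ?addr0 ?modzMDl ?modz_small // abszE; lia.
Qed.

Lemma int_homo_le_step (f : int -> int) : (forall j, f j <= f (j + 1)) ->
  {homo f : x y / x <= y}.
Proof.
move=> f_step x y le_xy; have -> : y = x + (`|y - x|%N)%:Z by lia.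
elim: `|y - x|%N => [|k IH]; first by rewrite addr0.
by apply: (le_trans IH); have -> : x + k.+1%:Z = x + k%:Z + 1 by lia.
Qed.

Lemma periodic_ext_isLam m n f0 :
  (forall r, 0 <= r < m.+1%:Z -> 0 <= f0 r) ->
  (forall r, 0 <= r -> r + 1 < m.+1%:Z -> f0 r <= f0 (r + 1)) ->
  f0 m%:Z <= n.+1%:Z + f0 0 ->
  isLam m n (periodic_ext m.+1 n.+1 f0).
Proof.
move=> f0_ge0 f0_step f0_wrap; split.
- apply: int_homo_le_step => j; rewrite {1 2}(divz_eq j m.+1%:Z).
  have := modz_bounds j (ltn0Sn m).
  move: (j %/ _)%Z (j %% _)%Z => q r r_bd; rewrite periodic_extE //.
  have [r_lt|r_ge] := boolP (r + 1 < m.+1%:Z).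
    by rewrite -addrA periodic_extE ?lerD2l ?f0_step //; lia.
  have r_eq : r = m%:Z by lia.
  have -> : q * m.+1%:Z + r + 1 = (q + 1) * m.+1%:Z + 0 by rewrite r_eq; lia.
  by rewrite periodic_extE // r_eq mulrDl mul1r -addrA lerD2l.
- move=> j; rewrite {1 2}(divz_eq j m.+1%:Z).
  have := modz_bounds j (ltn0Sn m).
  move: (j %/ _)%Z (j %% _)%Z => q r r_bd.
  rewrite -addrA (addrC r) addrA -{2}(mul1r m.+1%:Z) -mulrDl !periodic_extE //.
  by rewrite mulrDl mul1r addrAC.
- by rewrite /periodic_ext div0z mul0r add0r mod0z f0_ge0.
Qed.

Lemma eps_periodic n i :
  eps n i = periodic_ext n n.+1 (fun r => if r < i%:Z then r else r + 1).
Proof. by []. Qed.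

Lemma eta_periodic n i :
  eta n i = periodic_ext n.+2 n.+1 (fun r => if r <= i%:Z then r else r - 1).
Proof. by []. Qed.

Lemma eps_isLam n i : (i <= n.+1)%N -> isLam n n.+1 (eps n.+1 i).
Proof.
move=> le_i; rewrite eps_periodic; apply: periodic_ext_isLam.
all: by move=> * /=; repeat case: ifP => ?; lia.
Qed.

Lemma eta_isLam n i : (i <= n.+1)%N -> isLam n.+1 n (eta n i).
Proof.
move=> le_i; rewrite eta_periodic; apply: periodic_ext_isLam.
all: by move=> * /=; repeat case: ifP => ?; lia.
Qed.

Lemma id_isLam m : isLam m m id.
Proof. by split. Qed.

Lemma comp_isLam m n p f g :
  isLam m n f -> isLam n p g -> isLam m p (fun j => g (f j)).
Proof.
move=> [f_mono f_per f_ge0] [g_mono g_per g_ge0]; split=> [x y le_xy|j|].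
- exact/g_mono/f_mono.
- by rewrite f_per g_per.
- exact: le_trans g_ge0 (g_mono _ _ f_ge0).
Qed.

Lemma isLam_shift m n f : isLam m n f ->
  forall (q j : int), f (q * m.+1%:Z + j) = q * n.+1%:Z + f j.
Proof.
move=> [_ f_per _].
have shift_nat (q : nat) j : f (q%:Z * m.+1%:Z + j) = q%:Z * n.+1%:Z + f j.
  elim: q => [|q IH]; first by rewrite !mul0r !add0r.
  have -> : q.+1%:Z * m.+1%:Z + j = q%:Z * m.+1%:Z + j + m.+1%:Z by lia.
  by rewrite f_per IH; lia.
case=> q j; first exact: shift_nat.
have := shift_nat q.+1 (Negz q * m.+1%:Z + j).
have -> : q.+1%:Z * m.+1%:Z + (Negz q * m.+1%:Z + j) = j by rewrite NegzE; lia.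
by rewrite NegzE; lia.
Qed.

Lemma isLam_eq m n f g : isLam m n f -> isLam m n g ->
  (forall k, (k <= m)%N -> f k%:Z = g k%:Z) -> f =1 g.
Proof.
move=> Lf Lg fg j; rewrite (divz_eq j m.+1%:Z) (isLam_shift Lf) (isLam_shift Lg).
have := modz_bounds j (ltn0Sn m); case: (j %% _)%Z => [k|k] k_bd; last by lia.
by rewrite fg //; lia.
Qed.

Lemma eps_small n i k : (k < n)%N -> eps n i k%:Z = (if (k < i)%N then k else k.+1)%:Z.
Proof.
move=> lt_kn; rewrite eps_periodic -[k%:Z]add0r -(mul0r n%:Z) periodic_extE; [|lia|lia].
by rewrite mul0r add0r ltz_nat; case: ifP => // _; rewrite -addn1.
Qed.

Lemma eps_top n i : (0 < i)%N -> eps n.+1 i n.+1%:Z = n.+2%:Z.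
Proof.
by move=> i_gt0; rewrite eps_periodic /periodic_ext divzz modzz mul1r ltz_nat i_gt0 addr0.
Qed.

Lemma eta_small n i k :
  (k < n.+2)%N -> eta n i k%:Z = (if (k <= i)%N then k else k.-1)%:Z.
Proof.
move=> lt_kn; rewrite eta_periodic -[k%:Z]add0r -(mul0r n.+2%:Z) periodic_extE; [|by []|lia].
by rewrite mul0r add0r lez_nat; case: ifP => //; lia.
Qed.

Local Ltac eval_lam :=
  repeat first [ rewrite eps_small; last lia | rewrite eps_top; last lia
               | rewrite eta_small; last lia | case: ifP => ? ]; lia.

Lemma eta_eps_diag n i : (i <= n.+1)%N -> eta n i \o eps n.+1 i =1 id.
Proof.
move=> le_i; apply: (isLam_eq _ (id_isLam n)) => [|k le_k].
  exact: comp_isLam (eps_isLam le_i) (eta_isLam le_i).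
by rewrite /=; eval_lam.
Qed.

Lemma eta_epsS n i : (i <= n)%N -> eta n i \o eps n.+1 i.+1 =1 id.
Proof.
move=> le_i; apply: (isLam_eq _ (id_isLam n)) => [|k le_k].
  by apply: comp_isLam (eps_isLam _) (eta_isLam _); lia.
by rewrite /=; eval_lam.
Qed.

Lemma eta_eps_le n i j : (i <= j <= n.+1)%N -> (0 < i)%N || (j <= n)%N ->
  eta n.+1 j.+1 \o eps n.+2 i =1 eps n.+1 i \o eta n j.
Proof.
move=> le_ij cyc; apply: isLam_eq => [||k le_k].
- by apply: comp_isLam (eps_isLam _) (eta_isLam _); lia.
- by apply: comp_isLam (eta_isLam _) (eps_isLam _); lia.
case: (ltnP k n.+1) => [lt_k|ge_k]; last have -> : k = n.+1 by lia.
all: by rewrite /=; eval_lam.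
Qed.

Lemma eta_eps_gt n i j : (j < i <= n.+1)%N ->
  eta n.+1 j \o eps n.+2 i.+1 =1 eps n.+1 i \o eta n j.
Proof.
move=> lt_ji; apply: isLam_eq => [||k le_k].
- by apply: comp_isLam (eps_isLam _) (eta_isLam _); lia.
- by apply: comp_isLam (eta_isLam _) (eps_isLam _); lia.
by rewrite /=; eval_lam.
Qed.

Section Duplicial.
Variables (C : preadditive) (M : duplicial C).

Lemma Mmap_comp_id m n f g : isLam m n f -> isLam n m g -> g \o f =1 id ->
  hcomp (Mmap M m n f) (Mmap M n m g) = idm (Mob M m).
Proof.
move=> Lf Lg gf; rewrite -Mcomp // -Mid.
exact: Mext (comp_isLam Lf Lg) (id_isLam m) gf.
Qed.

Lemma Mmap_comp_eq m n n' p f g f' g' :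
  isLam m n f -> isLam n p g -> isLam m n' f' -> isLam n' p g' -> g \o f =1 g' \o f' ->
  hcomp (Mmap M m n f) (Mmap M n p g) = hcomp (Mmap M m n' f') (Mmap M n' p g').
Proof.
move=> Lf Lg Lf' Lg' gf; rewrite -!Mcomp //.
exact: Mext (comp_isLam Lf Lg) (comp_isLam Lf' Lg') gf.
Qed.

Lemma face_degen_diag n i : (i <= n.+1)%N ->
  hcomp (face M n i) (degen M n i) = idm (Mob M n).
Proof.
move=> le_i; apply: Mmap_comp_id (eta_eps_diag le_i).
all: first [apply: eps_isLam | apply: eta_isLam]; lia.
Qed.

Lemma faceS_degen n i : (i <= n)%N ->
  hcomp (face M n i.+1) (degen M n i) = idm (Mob M n).
Proof.
move=> le_i; apply: Mmap_comp_id (eta_epsS le_i).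
all: first [apply: eps_isLam | apply: eta_isLam]; lia.
Qed.

Lemma face_degenS n i j : (i <= j <= n.+1)%N -> (0 < i)%N || (j <= n)%N ->
  hcomp (face M n.+1 i) (degen M n.+1 j.+1) = hcomp (degen M n j) (face M n i).
Proof.
move=> le_ij cyc; apply: Mmap_comp_eq (eta_eps_le le_ij cyc).
all: first [apply: eps_isLam | apply: eta_isLam]; lia.
Qed.

Lemma face_degen_gt n i j : (j < i <= n.+1)%N ->
  hcomp (face M n.+1 i.+1) (degen M n.+1 j) = hcomp (degen M n j) (face M n i).
Proof.
move=> lt_ji; apply: Mmap_comp_eq (eta_eps_gt lt_ji).
all: first [apply: eps_isLam | apply: eta_isLam]; lia.
Qed.

Definition degen_face n i j : Hom (Mob M n) (Mob M n) :=
  if n is m.+1 then hcomp (degen M m j) (face M m i) else 0.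

Lemma kappaE n :
  kappa M n = (hcomp (face M n 0) (degen M n n.+1) - degen_face n 0 n) *~ (-1) ^+ n.
Proof. by case: n. Qed.

Lemma bS_dd n :
  hcomp (bS M n) (dd M n) = alt_sum2 n.+2 (fun i j => hcomp (face M n i) (degen M n j)).
Proof. exact: hcomp_alt_sums. Qed.

Lemma d_bE n : d_b M n = alt_sum2 n.+1 (degen_face n).
Proof.
case: n => [|m]; first by rewrite /alt_sum2 !big_ord1 mul0rz.
by rewrite /= hcomp_alt_sums -alt_sum2_tr.
Qed.
End Duplicial.

Theorem mainTheorem8 (C : preadditive) (M : duplicial C) (n : nat) :
  kappa M n = idm (Mob M n) - hcomp (bS M n) (dd M n) - d_b M n.
Proof.
rewrite -addrA -opprD bS_dd d_bE (alt_sum2_cyclic (e := idm (Mob M n))).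
  by rewrite opprB addrC subrK kappaE.
- exact: face_degen_diag.
- exact: faceS_degen.
- case: n => [|m] i j le_ij cyc; first by lia.
  by apply: face_degenS; lia.
- case: n => [|m] i j lt_ji; first by lia.
  exact: face_degen_gt.
Qed.
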